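(* (a) Let $n\ge1$ and let $x\in\beta\mathbb{N}$ be an ultrafilter on a finite level with $x\notin\overline{L_0\cup L_1\cup\cdots\cup L_{n-1}}$. Then there is an ultrafilter $y\in\overline{L_n}$ such that $y\,\tilde{\mid}\,x$. (b) Let $x\in\overline{L_m}$ and let $n\ge m$. Then there exists an ultrafilter $y\in\overline{L_n}$ such that $x\,\tilde{\mid}\,y$.
   Context: $\mathbb{N}=\{1,2,3,\dots\}$; $\beta\mathbb{N}$ is the set of ultrafilters on $\mathbb{N}$ (Stone–Čech compactification of discrete $\mathbb{N}$). For $A\subseteq\mathbb{N}$, $\overline{A}=\{x\in\beta\mathbb{N}:A\in x\}$. $P$ is the set of primes, $L_0=\{1\}$, $L_n=\{a_1\cdots a_n:a_1,\dots,a_n\in P\}$. An ultrafilter $x$ is on a finite level if $x\in\overline{L_i}$ for some $i\ge0$. For $x,y\in\beta\mathbb{N}$, $x\,\tilde{\mid}\,y$ iff for every $A\in x$ the set $\{k\in\mathbb{N}:\exists a\in A,\ a\mid k\}$ belongs to $y$. *)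

From mathcomp Require Import all_boot.
Set Implicit Arguments. Unset Strict Implicit. Unset Printing Implicit Defensive.

(* Subsets of nat are predicates nat -> Prop.  N = {1,2,...} is modelled as the
   positive naturals: an ultrafilter on N is a family of subsets of nat that is
   an ultrafilter on nat containing the set of positive naturals. *)
Definition nset := nat -> Prop.

Definition posN : nset := fun k => 0 < k.

Definition is_ultrafilter (x : nset -> Prop) : Prop :=
  [/\ x posN,
      ~ x (fun _ => False),
      (forall A B : nset, x A -> (forall k, A k -> B k) -> x B),
      (forall A B : nset, x A -> x B -> x (fun k => A k /\ B k)) &
      (forall A : nset, x A \/ x (fun k => ~ A k))].

(* A \in x  (i.e. x \in closure of A) is written  x A. *)

Definition L (n : nat) : nset :=
  fun k => exists s : seq nat, [/\ size s = n, all prime s & k = \prod_(p <- s) p].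

Definition up_div (A : nset) : nset :=
  fun k => 0 < k /\ exists a, A a /\ a %| k.

Definition tdiv (x y : nset -> Prop) : Prop :=
  forall A : nset, x A -> y (up_div A).

Definition finite_level (x : nset -> Prop) : Prop := exists i, x (L i).

(* Both parts push x forward along a map f.  If f k divides k (resp. k divides
   f k) for x-almost all k, then every set of the image ultrafilter has its
   divisibility closure in x (resp. every set of x has its closure in the
   image), so the image is a ~|-divisor (resp. ~|-multiple) of x.  For (a),
   x lives on some L_i with i >= n and f picks a divisor in L_n of each element
   of L_i; for (b), f k = k * 2^(n-m) maps L_m into L_n. *)
From mathcomp Require Import all_boot.
From Stdlib Require Import ClassicalEpsilon.

Set Implicit Arguments.
Unset Strict Implicit.

Definition push (x : nset -> Prop) (f : nat -> nat) : nset -> Prop :=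
  fun A => x (fun k => A (f k)).

Section Ultrafilter.

Variable x : nset -> Prop.
Hypothesis xU : is_ultrafilter x.

Lemma uf_posN : x posN.
Proof. by case: xU. Qed.

Lemma ufS (A B : nset) : x A -> (forall k, A k -> B k) -> x B.
Proof. by case: xU => _ _ xS _ _; apply: xS. Qed.

Lemma ufI (A B : nset) : x A -> x B -> x (fun k => A k /\ B k).
Proof. by case: xU => _ _ _ xI _; apply: xI. Qed.

Lemma push_uf (f : nat -> nat) :
  x (fun k => 0 < f k) -> is_ultrafilter (push x f).
Proof.
case: xU => _ x0 xS xI xC fpos; split => //.
- by move=> A B xA AB; apply: xS xA _ => k; apply: AB.
- by move=> A B; apply: xI.
- by move=> A; apply: xC.
Qed.

Lemma tdiv_push_dvd (f : nat -> nat) :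
  x (fun k => f k %| k) -> tdiv (push x f) x.
Proof.
move=> fdvd A xfA; apply: (ufS (ufI (ufI uf_posN xfA) fdvd)) => k [[k_gt0 Afk] fk_dvd].
by split=> //; exists (f k).
Qed.

Lemma tdiv_push_dvdr (f : nat -> nat) :
  x (fun k => 0 < f k) -> x (fun k => k %| f k) -> tdiv x (push x f).
Proof.
move=> fpos dvdf A xA; apply: (ufS (ufI (ufI fpos dvdf) xA)) => k [[fk_gt0 k_dvd] Ak].
by split=> //; exists k.
Qed.

Lemma uf_level_ge (n : nat) :
  finite_level x -> ~ x (fun k => exists i, i < n /\ L i k) ->
  exists2 i, n <= i & x (L i).
Proof.
move=> [i xLi] x_below; exists i => //; rewrite leqNgt; apply/negP => i_lt_n.
by apply: x_below; apply: (ufS xLi) => k Lik; exists i.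
Qed.

End Ultrafilter.

Lemma L_gt0 (n k : nat) : L n k -> 0 < k.
Proof.
case=> s [_ + ->]; elim: s => [|p s IHs] /=; first by rewrite big_nil.
by case/andP=> p_pr s_pr; rewrite big_cons muln_gt0 prime_gt0 // IHs.
Qed.

Lemma L_mul (m n a b : nat) : L m a -> L n b -> L (m + n) (a * b).
Proof.
case=> s [<- s_pr ->] [t [<- t_pr ->]]; exists (s ++ t).
by rewrite size_cat all_cat s_pr t_pr big_cat.
Qed.

Lemma L_expn (p n : nat) : prime p -> L n (p ^ n).
Proof.
move=> p_pr; exists (nseq n p).
by rewrite size_nseq big_nseq iter_muln_1 all_nseq p_pr orbT.
Qed.

Lemma L_dvd_leq (n i k : nat) : n <= i -> L i k -> exists2 d, L n d & d %| k.
Proof.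
move=> n_le_i [s [size_s s_pr ->]]; subst i.
rewrite -(cat_take_drop n s) all_cat in s_pr; case/andP: s_pr => take_pr _.
exists (\prod_(p <- take n s) p).
  by exists (take n s); rewrite size_takel.
by rewrite -{2}(cat_take_drop n s) big_cat dvdn_mulr.
Qed.

Definition level_divisor (n k : nat) : nat :=
  epsilon (inhabits 0) (fun d => L n d /\ d %| k).

Lemma level_divisorP (n i k : nat) :
  n <= i -> L i k -> L n (level_divisor n k) /\ level_divisor n k %| k.
Proof.
move=> n_le_i Lik; have [d Lnd d_dvd] := L_dvd_leq n_le_i Lik.
by apply: (epsilon_spec _ (fun d => L n d /\ d %| k)); exists d.
Qed.

Theorem theorem2p14 :
  (* (a) *)
  (forall (n : nat) (x : nset -> Prop),
      1 <= n -> is_ultrafilter x -> finite_level x ->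
      ~ x (fun k => exists i, i < n /\ L i k) ->
      exists y : nset -> Prop, [/\ is_ultrafilter y, y (L n) & tdiv y x])
  /\
  (* (b) *)
  (forall (m n : nat) (x : nset -> Prop),
      is_ultrafilter x -> x (L m) -> m <= n ->
      exists y : nset -> Prop, [/\ is_ultrafilter y, y (L n) & tdiv x y]).
Proof.
split.
- move=> n x _ xU xfin x_below.
  have [i n_le_i xLi] := uf_level_ge xU xfin x_below.
  have xdiv : x (fun k => L n (level_divisor n k) /\ level_divisor n k %| k).
    by apply: (ufS xU xLi) => k /(level_divisorP n_le_i).
  exists (push x (level_divisor n)); split.
  + by apply: (push_uf xU (ufS xU xdiv _)) => // k [/L_gt0].
  + by apply: (ufS xU xdiv) => k [].
  + by apply: (tdiv_push_dvd xU (ufS xU xdiv _)) => // k [].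
- move=> m n x xU xLm m_le_n; pose f k := k * 2 ^ (n - m).
  have xLf : x (fun k => L n (f k)).
    apply: (ufS xU xLm) => k Lmk; rewrite -{1}(subnKC m_le_n).
    exact: L_mul Lmk (L_expn _ _).
  exists (push x f); split => //.
  + by apply: (push_uf xU (ufS xU xLf _)) => // k /L_gt0.
  + apply: (tdiv_push_dvdr xU (ufS xU xLf _)) => [k /L_gt0 //|].
    by apply: (ufS xU (uf_posN xU)) => k _; apply: dvdn_mulr.
Qed.
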